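(* Let $n=2$, assume Assumptions A and B, $c_1^2+c_2^2>0$, and that the solution $S$ of (IVP) exists on $[r_0,\infty)$ with limit $s_\infty=\lim_{r\to\infty}S(r)$. If $s_\infty\notin\{0,1\}$, then $c_1c_2>0$ and $s_\infty=s^*$.
   Context: For $i=1,2$, $g_i(s)=a^{(i)}_0+a^{(i)}_1s^{\alpha^{(i)}_1}+\dots+a^{(i)}_{N_i}s^{\alpha^{(i)}_{N_i}}$ ($s\ge0$) with $N_i\ge0$, $a^{(i)}_0>0$, $a^{(i)}_j\ge0$, real $0<\alpha^{(i)}_1<\dots<\alpha^{(i)}_{N_i}$; $G_i(u)=g_i(|u|)u$ for $u\in\mathbb R$. Assumption A: $f_1,f_2\in C([0,1])\cap C^1((0,1))$, $f_1(0)=0$, $f_2(1)=0$, $f_1'>0$, $f_2'<0$ on $(0,1)$. Assumption B: $p_c'\in C^1((0,1))$, $p_c'>0$ on $(0,1)$. $F_i(S)=1/(p_c'(S)f_i(S))$. (IVP) with dimension $n$: $S'(r)=G_2(c_2r^{1-n})F_2(S)-G_1(c_1r^{1-n})F_1(S)$ for $r>r_0$, $S(r_0)=s_0\in(0,1)$, $0<S<1$. The function $f=f_1/f_2$ is a strictly increasing bijection of $(0,1)$ onto $(0,\infty)$; when $c_1c_2>0$ define $s^*=f^{-1}\big(c_1a^{(1)}_0/(c_2a^{(2)}_0)\big)\in(0,1)$. *)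

From Stdlib Require Import Reals Lra.
Open Scope R_scope.

Definition pw (s alpha : R) : R :=
  if Rlt_dec 0 s then Rpower s alpha else 0.

Fixpoint gsum (a al : nat -> R) (N : nat) (s : R) : R :=
  match N with
  | O => 0
  | S k => gsum a al k s + a (S k) * pw s (al (S k))
  end.

Definition gfun (a al : nat -> R) (N : nat) (s : R) : R := a O + gsum a al N s.

Definition Gfun (a al : nat -> R) (N : nat) (u : R) : R := gfun a al N (Rabs u) * u.

Definition g_coeffs_ok (a al : nat -> R) (N : nat) : Prop :=
  0 < a O /\
  (forall j, (1 <= j <= N)%nat -> 0 <= a j) /\
  (forall j, (1 <= j <= N)%nat -> 0 < al j) /\
  (forall j, (1 <= j < N)%nat -> al j < al (S j)).

Definition Ffun (dpc fi : R -> R) (s : R) : R := 1 / (dpc s * fi s).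

Definition cont_on_01 (f : R -> R) : Prop :=
  forall x, 0 <= x <= 1 -> limit1_in f (fun y => 0 <= y <= 1) (f x) x.

Definition C1_on_01 (f df : R -> R) : Prop :=
  forall x, 0 < x < 1 -> derivable_pt_lim f x (df x) /\ continuity_pt df x.

Definition lim_infty (S : R -> R) (l : R) : Prop :=
  forall eps, eps > 0 -> exists M, forall r, r >= M -> Rabs (S r - l) < eps.

(* s is s^* = f^{-1}(c1 a0^(1)/(c2 a0^(2))), f = f1/f2 : (0,1) -> (0,oo) *)
Definition is_sstar (f1 f2 : R -> R) (c1 c2 a10 a20 s : R) : Prop :=
  0 < s < 1 /\ f1 s / f2 s = (c1 * a10) / (c2 * a20).

From Stdlib Require Import Reals Lra Lia.
From Coquelicot Require Import Coquelicot.
Open Scope R_scope.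

(* Write (IVP) for n = 2 as  r S'(r) = K(r)  with
     K(r) = r G_2(c_2/r) F_2(S(r)) - r G_1(c_1/r) F_1(S(r)).
   Since g_i(t) -> a_0^(i) as t -> 0+, r G_i(c_i/r) = g_i(|c_i/r|) c_i -> a_0^(i) c_i,
   and if s_oo lies in (0,1) then F_i is continuous at s_oo, so
     K(r) -> L = a_0^(2) c_2 F_2(s_oo) - a_0^(1) c_1 F_1(s_oo).
   A convergent S cannot have r S'(r) tending to a nonzero limit (by the mean value
   theorem on [x, 2x], the increment S(2x) - S(x) would stay at least |L|/4), hence L = 0.
   Because f_1, f_2, p_c' are positive at s_oo this balance forces c_1 c_2 > 0 and
   f_1(s_oo)/f_2(s_oo) = c_1 a_0^(1) / (c_2 a_0^(2)), i.e. s_oo = s^*. *)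

Lemma pw_small (al : R) : 0 < al -> forall eps, 0 < eps ->
  exists d, 0 < d /\ forall s, 0 <= s < d -> Rabs (pw s al) < eps.
Proof.
  intros Hal eps He. exists (exp (ln eps / al)). split; [apply exp_pos|].
  intros s [Hs0 Hsd]. unfold pw. destruct (Rlt_dec 0 s) as [Hs|_].
  - unfold Rpower. rewrite Rabs_pos_eq by (left; apply exp_pos).
    rewrite <- (exp_ln eps He). apply exp_increasing.
    assert (Hln : ln s < ln eps / al).
    { rewrite <- (ln_exp (ln eps / al)). apply ln_increasing; auto. }
    apply (Rmult_lt_compat_l al) in Hln; auto.
    replace (al * (ln eps / al)) with (ln eps) in Hln by (field; lra). lra.
  - rewrite Rabs_R0. auto.
Qed.

Lemma gsum_small (a al : nat -> R) (N : nat) :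
  (forall j, (1 <= j <= N)%nat -> 0 < al j) -> forall eps, 0 < eps ->
  exists d, 0 < d /\ forall s, 0 <= s < d -> Rabs (gsum a al N s) < eps.
Proof.
  induction N as [|k IH]; intros Hal eps He.
  - exists 1. split; [lra|]. intros s _. simpl. rewrite Rabs_R0. auto.
  - destruct (IH (fun j Hj => Hal j ltac:(lia)) (eps / 2) ltac:(lra))
      as [d1 [Hd1 Hsum]].
    set (A := Rabs (a (S k))).
    assert (HA : 0 <= A) by apply Rabs_pos.
    destruct (pw_small (al (S k)) (Hal (S k) ltac:(lia)) (eps / (2 * (A + 1))))
      as [d2 [Hd2 Hpw]].
    { apply Rdiv_lt_0_compat; lra. }
    exists (Rmin d1 d2). split; [apply Rmin_pos; auto|].
    intros s [Hs0 Hsd].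
    pose proof (Rmin_l d1 d2). pose proof (Rmin_r d1 d2).
    specialize (Hsum s ltac:(lra)). specialize (Hpw s ltac:(lra)).
    simpl. eapply Rle_lt_trans; [apply Rabs_triang|]. rewrite Rabs_mult. fold A.
    assert (Hterm : A * Rabs (pw s (al (S k))) <= A * (eps / (2 * (A + 1))))
      by (apply Rmult_le_compat_l; lra).
    assert (A * (eps / (2 * (A + 1))) <= eps / 2).
    { apply (Rmult_le_reg_r (2 * (A + 1))); [lra|]. field_simplify; [|lra]. nra. }
    lra.
Qed.

Lemma lim_scaled_G (a al : nat -> R) (N : nat) (c : R) :
  (forall j, (1 <= j <= N)%nat -> 0 < al j) ->
  is_lim (fun r => r * Gfun a al N (c * / r)) p_infty (a O * c).
Proof.
  intros Hal. apply is_lim_spec. intros [eps He]; simpl.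
  pose proof (Rabs_pos c) as Hc.
  destruct (gsum_small a al N Hal (eps / (Rabs c + 1))) as [d [Hd Hg]].
  { apply Rdiv_lt_0_compat; lra. }
  exists (Rabs c / d + 1). intros r Hr.
  assert (0 <= Rabs c / d) by (apply Rdiv_le_0_compat; lra).
  assert (Hr0 : 0 < r) by lra.
  assert (Hsmall : Rabs (c * / r) < d).
  { rewrite Rabs_mult, Rabs_inv, (Rabs_pos_eq r) by lra.
    apply (Rmult_lt_reg_r r); [lra|]. field_simplify; [|lra].
    assert (Hlt : Rabs c / d < r) by lra.
    apply (Rmult_lt_compat_r d) in Hlt; auto. field_simplify in Hlt; lra. }
  specialize (Hg _ (conj (Rabs_pos _) Hsmall)).
  unfold Gfun, gfun.
  replace (r * ((a O + gsum a al N (Rabs (c * / r))) * (c * / r)) - a O * c)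
    with (gsum a al N (Rabs (c * / r)) * c) by (field; lra).
  rewrite Rabs_mult.
  assert (Rabs (gsum a al N (Rabs (c * / r))) * Rabs c <= eps / (Rabs c + 1) * Rabs c)
    by (apply Rmult_le_compat_r; lra).
  assert (eps / (Rabs c + 1) * Rabs c < eps).
  { apply (Rmult_lt_reg_r (Rabs c + 1)); [lra|]. field_simplify; lra. }
  lra.
Qed.

Lemma strict_incr_01 (f df : R -> R) :
  (forall x, 0 < x < 1 -> derivable_pt_lim f x (df x)) ->
  (forall x, 0 < x < 1 -> df x > 0) ->
  forall y z, 0 < y -> y < z -> z < 1 -> f y < f z.
Proof.
  intros Hd Hp y z Hy Hyz Hz.
  destruct (MVT_gen f y z df) as [c [Hc Heq]];
    rewrite ?Rmin_left, ?Rmax_right in * by lra.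
  - intros x Hx. apply is_derive_Reals, Hd. lra.
  - intros x Hx. apply derivable_continuous_pt. exists (df x). apply Hd. lra.
  - assert (0 < df c * (z - y)) by (apply Rmult_lt_0_compat; [apply Hp|]; lra).
    lra.
Qed.

Lemma pos_of_incr_from_0 (f : R -> R) : cont_on_01 f -> f 0 = 0 ->
  (forall y z, 0 < y -> y < z -> z < 1 -> f y < f z) ->
  forall s, 0 < s < 1 -> f s > 0.
Proof.
  intros Hc H0 Hi s Hs. destruct (Rlt_le_dec 0 (f s)) as [|Hle]; [lra|].
  exfalso. set (m := s / 2).
  assert (Hm : f m < f s) by (apply Hi; unfold m; lra).
  destruct (Hc 0 ltac:(lra) (- f m) ltac:(lra)) as [alp [Halp Hnear]].
  set (x := Rmin (alp / 2) (m / 2)).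
  assert (x <= alp / 2) by apply Rmin_l.
  assert (x <= m / 2) by apply Rmin_r.
  assert (0 < x) by (apply Rmin_pos; unfold m; lra).
  assert (f x < f m) by (apply Hi; unfold m in *; lra).
  assert (Hfx : Rabs (f x - f 0) < - f m).
  { apply Hnear. simpl; unfold R_dist. split; [unfold m in *; lra|].
    rewrite Rminus_0_r, Rabs_pos_eq; lra. }
  rewrite H0, Rminus_0_r, Rabs_left in Hfx by lra. lra.
Qed.

Lemma cont_on_01_reflect (f : R -> R) :
  cont_on_01 f -> cont_on_01 (fun x => f (1 - x)).
Proof.
  intros Hc x Hx eps He.
  destruct (Hc (1 - x) ltac:(lra) eps He) as [alp [Halp Hnear]].
  exists alp. split; auto. intros y [Hy Hyx]. apply Hnear.
  simpl in *; unfold R_dist in *. split; [lra|].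
  replace (1 - y - (1 - x)) with (- (y - x)) by ring. rewrite Rabs_Ropp. exact Hyx.
Qed.

Lemma f1_pos (f1 df1 : R -> R) : cont_on_01 f1 -> C1_on_01 f1 df1 -> f1 0 = 0 ->
  (forall x, 0 < x < 1 -> df1 x > 0) -> forall s, 0 < s < 1 -> f1 s > 0.
Proof.
  intros Hc Hd H0 Hp. apply pos_of_incr_from_0; auto.
  apply (strict_incr_01 f1 df1); auto. intros x Hx. apply Hd; auto.
Qed.

(* Under Assumption A, f_2 > 0 on (0,1): reflect to the situation of f_1. *)
Lemma f2_pos (f2 df2 : R -> R) : cont_on_01 f2 -> C1_on_01 f2 df2 -> f2 1 = 0 ->
  (forall x, 0 < x < 1 -> df2 x < 0) -> forall s, 0 < s < 1 -> f2 s > 0.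
Proof.
  intros Hc Hd H1 Hn s Hs.
  replace s with (1 - (1 - s)) by ring.
  apply (pos_of_incr_from_0 (fun x => f2 (1 - x))); [apply cont_on_01_reflect; auto
    | rewrite Rminus_0_r; auto | | lra].
  apply (strict_incr_01 _ (fun x => - df2 (1 - x))).
  - intros x Hx.
    replace (- df2 (1 - x)) with (df2 (1 - x) * (0 - 1)) by ring.
    apply (derivable_pt_lim_comp (fun x => 1 - x) f2).
    + apply derivable_pt_lim_minus; [apply derivable_pt_lim_const | apply derivable_pt_lim_id].
    + apply Hd. lra.
  - intros x Hx. specialize (Hn (1 - x) ltac:(lra)). lra.
Qed.

Lemma Ffun_continuous (dpc ddpc f df : R -> R) (s : R) :
  C1_on_01 dpc ddpc -> C1_on_01 f df -> 0 < s < 1 ->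
  dpc s > 0 -> f s > 0 -> continuity_pt (Ffun dpc f) s.
Proof.
  intros Hd Hf Hs Hp Hq.
  assert (Cd : continuity_pt dpc s).
  { apply derivable_continuous_pt. exists (ddpc s). apply (Hd s Hs). }
  assert (Cf : continuity_pt f s).
  { apply derivable_continuous_pt. exists (df s). apply (Hf s Hs). }
  apply (continuity_pt_div (fct_cte 1) (mult_fct dpc f) s).
  - apply continuity_pt_const. intros ? ?; reflexivity.
  - apply continuity_pt_mult; auto.
  - unfold mult_fct. apply Rgt_not_eq, Rmult_gt_0_compat; auto.
Qed.

Lemma lim_infty_is_lim (S : R -> R) (l : R) : lim_infty S l -> is_lim S p_infty l.
Proof.
  intros H. apply is_lim_spec. intros [eps He]; simpl.
  destruct (H eps He) as [M HM]. exists M. intros r Hr. apply HM. lra.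
Qed.

Lemma lim_in_closed_interval (S : R -> R) (r0 lo hi l : R) :
  (forall r, r >= r0 -> lo < S r < hi) -> lim_infty S l -> lo <= l <= hi.
Proof.
  intros Hrange Hlim.
  assert (Hfar : forall eps, eps > 0 -> exists r, lo < S r < hi /\ Rabs (S r - l) < eps).
  { intros eps He. destruct (Hlim eps He) as [M HM].
    exists (Rmax M r0). split.
    - apply Hrange, Rle_ge, Rmax_r.
    - apply HM, Rle_ge, Rmax_l. }
  split; apply Rnot_lt_le; intro Hout.
  - destruct (Hfar (lo - l) ltac:(lra)) as [r [Hr Hd]]. apply Rabs_def2 in Hd. lra.
  - destruct (Hfar (l - hi) ltac:(lra)) as [r [Hr Hd]]. apply Rabs_def2 in Hd. lra.
Qed.

(* If S converges at infinity and r S'(r) -> L, then L = 0: otherwise the mean value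
   theorem on [x, 2x] gives |S(2x) - S(x)| >= |L|/4 for all large x. *)
Lemma radial_derivative_limit_zero (S D : R -> R) (r0 s L : R) :
  (forall r, r > r0 -> derivable_pt_lim S r (D r)) ->
  is_lim S p_infty s -> is_lim (fun r => r * D r) p_infty L -> L = 0.
Proof.
  intros Hder HS HD. destruct (Req_dec L 0) as [|HL]; auto. exfalso.
  assert (HaL : 0 < Rabs L) by (apply Rabs_pos_lt; auto).
  apply is_lim_spec in HS. apply is_lim_spec in HD.
  destruct (HD (mkposreal (Rabs L / 2) ltac:(lra))) as [M1 HM1]; simpl in HM1.
  destruct (HS (mkposreal (Rabs L / 8) ltac:(lra))) as [M2 HM2]; simpl in HM2.
  set (x := Rmax (Rmax M1 M2) (Rmax r0 0) + 1).
  assert (Hx : M1 < x /\ M2 < x /\ r0 < x /\ 0 < x).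
  { pose proof (Rmax_l (Rmax M1 M2) (Rmax r0 0)). pose proof (Rmax_r (Rmax M1 M2) (Rmax r0 0)).
    pose proof (Rmax_l M1 M2). pose proof (Rmax_r M1 M2).
    pose proof (Rmax_l r0 0). pose proof (Rmax_r r0 0). unfold x; lra. }
  clearbody x.
  destruct (MVT_gen S x (2 * x) D) as [c [Hc Heq]];
    rewrite ?Rmin_left, ?Rmax_right in * by lra.
  - intros y Hy. apply is_derive_Reals, Hder. lra.
  - intros y Hy. apply derivable_continuous_pt. exists (D y). apply Hder. lra.
  -
    assert (Hinc : Rabs (S (2 * x) - S x) < Rabs L / 4).
    { replace (S (2 * x) - S x) with ((S (2 * x) - s) - (S x - s)) by ring.
      eapply Rle_lt_trans; [apply Rabs_triang|]. rewrite Rabs_Ropp.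
      pose proof (HM2 x ltac:(lra)). pose proof (HM2 (2 * x) ltac:(lra)).
      lra. }
    assert (HcD : Rabs L / 2 < Rabs (c * D c)).
    { pose proof (HM1 c ltac:(lra)) as Hnear.
      pose proof (Rabs_triang_inv L (c * D c)) as Htri.
      replace (L - c * D c) with (- (c * D c - L)) in Htri by ring.
      rewrite Rabs_Ropp in Htri. lra. }
    rewrite Heq in Hinc. replace (2 * x - x) with x in Hinc by ring.
    rewrite Rabs_mult, (Rabs_pos_eq x) in Hinc by lra.
    rewrite Rabs_mult, (Rabs_pos_eq c) in HcD by lra.
    pose proof (Rabs_pos (D c)). nra.
Qed.

Lemma balance_solve (a1 a2 c1 c2 u p1 p2 : R) :
  0 < a1 -> 0 < a2 -> 0 < u -> 0 < p1 -> 0 < p2 -> c1 ^ 2 + c2 ^ 2 > 0 ->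
  a2 * c2 * (1 / (u * p2)) - a1 * c1 * (1 / (u * p1)) = 0 ->
  c1 * c2 > 0 /\ p1 / p2 = (c1 * a1) / (c2 * a2).
Proof.
  intros Ha1 Ha2 Hu Hp1 Hp2 Hc Hbal.
  assert (Hcross : c2 * a2 * p1 = c1 * a1 * p2).
  { apply (Rmult_eq_reg_r (/ (u * p1 * p2))).
    - replace (c2 * a2 * p1 * / (u * p1 * p2)) with (a2 * c2 * (1 / (u * p2)))
        by (field; lra).
      replace (c1 * a1 * p2 * / (u * p1 * p2)) with (a1 * c1 * (1 / (u * p1)))
        by (field; lra).
      lra.
    - apply Rinv_neq_0_compat. apply Rgt_not_eq. repeat apply Rmult_gt_0_compat; lra. }
  assert (Hc2 : c2 <> 0).
  { intro H0. subst c2.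
    assert (c1 = 0).
    { apply (Rmult_eq_reg_r (a1 * p2)); [|nra]. nra. }
    subst c1. lra. }
  assert (Hc1 : c1 = c2 * (a2 * p1 / (a1 * p2))) by (field_simplify_eq; nra).
  split.
  - rewrite Hc1.
    assert (0 < a2 * p1 / (a1 * p2)) by (apply Rdiv_lt_0_compat; nra).
    assert (0 < c2 * c2) by (destruct (Rlt_dec 0 c2); nra).
    nra.
  - rewrite Hc1. field. lra.
Qed.

Theorem lemma2p4
  (N1 N2 : nat) (a1 al1 a2 al2 : nat -> R)
  (f1 f2 df1 df2 pc dpc ddpc : R -> R)
  (c1 c2 r0 s0 sinf : R) (Ssol : R -> R)
  (* coefficients of g_1, g_2 *)
  (hg1 : g_coeffs_ok a1 al1 N1) (hg2 : g_coeffs_ok a2 al2 N2)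
  (* Assumption A *)
  (hf1c : cont_on_01 f1) (hf2c : cont_on_01 f2)
  (hf1d : C1_on_01 f1 df1) (hf2d : C1_on_01 f2 df2)
  (hf10 : f1 0 = 0) (hf21 : f2 1 = 0)
  (hdf1 : forall x, 0 < x < 1 -> df1 x > 0)
  (hdf2 : forall x, 0 < x < 1 -> df2 x < 0)
  (* Assumption B *)
  (hpc : forall x, 0 < x < 1 -> derivable_pt_lim pc x (dpc x))
  (hdpc : C1_on_01 dpc ddpc)
  (hdpcpos : forall x, 0 < x < 1 -> dpc x > 0)
  (* c_1^2 + c_2^2 > 0 *)
  (hc : c1 ^ 2 + c2 ^ 2 > 0)
  (* the solution of (IVP) with n = 2 exists on [r0, oo) *)
  (hr0 : 0 < r0) (hs0 : 0 < s0 < 1)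
  (hSr0 : Ssol r0 = s0)
  (hScont : limit1_in Ssol (fun r => r0 <= r) s0 r0)
  (hSrange : forall r, r >= r0 -> 0 < Ssol r < 1)
  (hSode : forall r, r > r0 ->
     derivable_pt_lim Ssol r
       (Gfun a2 al2 N2 (c2 * / r) * Ffun dpc f2 (Ssol r)
        - Gfun a1 al1 N1 (c1 * / r) * Ffun dpc f1 (Ssol r)))
  (* limit at infinity *)
  (hlim : lim_infty Ssol sinf)
  (hsinf : sinf <> 0 /\ sinf <> 1) :
  c1 * c2 > 0 /\ is_sstar f1 f2 c1 c2 (a1 O) (a2 O) sinf.
Proof.
  destruct hg1 as [ha10 [_ [hal1 _]]], hg2 as [ha20 [_ [hal2 _]]].
  assert (Hs01 : 0 < sinf < 1)
    by (pose proof (lim_in_closed_interval _ _ _ _ _ hSrange hlim); destruct hsinf; lra).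
  pose proof (f1_pos f1 df1 hf1c hf1d hf10 hdf1 sinf Hs01) as Hp1.
  pose proof (f2_pos f2 df2 hf2c hf2d hf21 hdf2 sinf Hs01) as Hp2.
  pose proof (hdpcpos sinf Hs01) as Hu.
  pose proof (lim_infty_is_lim _ _ hlim) as HS.
  assert (HF : forall f df, C1_on_01 f df -> f sinf > 0 ->
            is_lim (fun r => Ffun dpc f (Ssol r)) p_infty (Ffun dpc f sinf)).
  { intros f df Hf Hpos. eapply filterlim_comp; [exact HS|].
    apply continuity_pt_filterlim. eapply Ffun_continuous; eauto. }
  assert (Hbal : a2 O * c2 * Ffun dpc f2 sinf - a1 O * c1 * Ffun dpc f1 sinf = 0).
  { apply (radial_derivative_limit_zero Ssol _ r0 sinf _ hSode HS).
    apply (is_lim_ext (fun r => r * Gfun a2 al2 N2 (c2 * / r) * Ffun dpc f2 (Ssol r)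
                              - r * Gfun a1 al1 N1 (c1 * / r) * Ffun dpc f1 (Ssol r))).
    { intros r. ring. }
    apply is_lim_minus'; apply (is_lim_mult _ _ _ (Finite _) (Finite _)); try exact I.
    all: first [ apply lim_scaled_G; auto | eapply HF; eauto ]. }
  destruct (balance_solve (a1 O) (a2 O) c1 c2 (dpc sinf) (f1 sinf) (f2 sinf))
    as [Hcc Hratio]; auto.
  split; [exact Hcc | split; auto].
Qed.
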